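(* Let $\mathcal{P}=(\mathcal{V},\mathcal{L},\ell_0,\mathcal{T})$ be an integer program, let $\emptyset\ne\mathcal{T}'\subseteq\mathcal{T}\setminus\mathcal{T}_0$, let $t'\in\mathcal{T}'$, let $\mathcal{SB}_{t'}$ be a local size bound for $t'$ w.r.t. $\mathcal{T}'$, and let $\mathcal{SB}:(\mathcal{T}\times\mathcal{V})\to\mathcal{B}$ be a size bound for $\mathcal{P}$. Define $\mathcal{SB}'(t',x)=\sum_{r\in\mathcal{E}_{\mathcal{T}'}}\mathcal{SB}_{t'}(x)\,[v/\mathcal{SB}(r,v)\mid v\in\mathcal{V}]$ for all $x\in\mathcal{V}$, and $\mathcal{SB}'(t,x)=\mathcal{SB}(t,x)$ for all $t\ne t'$ and $x\in\mathcal{V}$. Then $\mathcal{SB}'$ is also a size bound for $\mathcal{P}$.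
   Context: Formulas $\mathcal{F}(\mathcal{V})$ are built from inequations $p>0$ ($p\in\mathbb{Q}[\mathcal{V}]$) with $\wedge,\vee$. An integer program is a tuple $(\mathcal{V},\mathcal{L},\ell_0,\mathcal{T})$ with a finite set of variables $\mathcal{V}$, a finite set of locations $\mathcal{L}$, an initial location $\ell_0\in\mathcal{L}$, and a finite set $\mathcal{T}$ of transitions $(\ell,\varphi,\eta,\ell')$ with $\ell\in\mathcal{L}$, $\ell'\in\mathcal{L}\setminus\{\ell_0\}$, guard $\varphi\in\mathcal{F}(\mathcal{V})$ and update $\eta:\mathcal{V}\to\mathbb{Z}[\mathcal{V}]$. $\mathcal{T}_0$ is the set of transitions starting in $\ell_0$. States $\sigma:\mathcal{V}\to\mathbb{Z}$, $\Sigma$ their set, $|\sigma|(x)=|\sigma(x)|$. Evaluation: $(\ell,\sigma)\to_t(\ell',\sigma')$ for $t=(\ell,\varphi,\eta,\ell')$ if $\sigma(\varphi)$ holds and $\sigma'(v)=\sigma(\eta(v))$ for all $v$; $\to_{\mathcal{T}'}=\bigcup_{t\in\mathcal{T}'}\to_t$, $\to=\to_{\mathcal{T}}$, and $^*$ denotes reflexive-transitive closure. Bounds $\mathcal{B}$: smallest set containing $\mathbb{N}\cup\{\omega\}$ and $\mathcal{V}$ and closed under $+$, $\cdot$, $k^{(\cdot)}$ for $k\in\mathbb{N}$; $b[v/p_v\mid v\in\mathcal{V}]$ replaces each $v$ in $b$ by $p_v$. Size bound for $\mathcal{P}$: $\mathcal{SB}:(\mathcal{T}\times\mathcal{V})\to\mathcal{B}$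 such that for all $(t,x)$ and $\sigma_0\in\Sigma$, $|\sigma_0|(\mathcal{SB}(t,x))\ge\sup\{|\sigma'(x)|\mid\exists\ell'.\ (\ell_0,\sigma_0)\,(\to^*\circ\to_t)\,(\ell',\sigma')\}$. Entry transitions of $\emptyset\ne\mathcal{T}'\subseteq\mathcal{T}\setminus\mathcal{T}_0$: $\mathcal{E}_{\mathcal{T}'}=\{t=(\_,\_,\_,\ell)\in\mathcal{T}\setminus\mathcal{T}'\mid\text{some transition }(\ell,\_,\_,\_)\in\mathcal{T}'\}$. Local size bound for $t'\in\mathcal{T}'$ w.r.t. $\mathcal{T}'$: $\mathcal{SB}_{t'}:\mathcal{V}\to\mathcal{B}$ with, for all $x\in\mathcal{V}$, $\sigma\in\Sigma$: $|\sigma|(\mathcal{SB}_{t'}(x))\ge\sup\{|\sigma'(x)|\mid\exists\ell'\in\mathcal{L},(\_,\_,\_,\ell)\in\mathcal{E}_{\mathcal{T}'}.\ (\ell,\sigma)\,(\to^*_{\mathcal{T}'}\circ\to_{t'})\,(\ell',\sigma')\}$. *)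

From mathcomp Require Import all_boot all_order all_algebra.
Set Implicit Arguments. Unset Strict Implicit. Unset Printing Implicit Defensive.
Import Order.TTheory GRing.Theory Num.Theory.

(* Polynomial expressions over variables V with coefficients in R.
   Every polynomial in R[V] is denoted by such an expression. *)
Inductive pexpr (R V : Type) : Type :=
| PConst of R
| PVar of V
| PAdd of pexpr R V & pexpr R V
| PMul of pexpr R V & pexpr R V.
Arguments PConst {R V}. Arguments PVar {R V}.

Fixpoint peval (R : comPzRingType) (V : Type) (rho : V -> R) (p : pexpr R V) : R :=
  match p with
  | PConst c => c
  | PVar v => rho v
  | PAdd p q => (peval rho p + peval rho q)%R
  | PMul p q => (peval rho p * peval rho q)%R
  end.

Inductive formula (V : Type) : Type :=
| FGt of pexpr rat V
| FAnd of formula V & formula V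
| FOr of formula V & formula V.

Definition state (V : Type) := V -> int.

Fixpoint fholds (V : Type) (s : state V) (phi : formula V) : Prop :=
  match phi with
  | FGt p => (0 < peval (fun v => (s v)%:~R : rat) p)%R
  | FAnd a b => fholds s a /\ fholds s b
  | FOr a b => fholds s a \/ fholds s b
  end.

(* Transitions are given by a finite index type Tr; each index t denotes the
   tuple (src t, guard t, upd t, tgt t). *)
Record intprog (V L Tr : finType) := IntProg {
  l0 : L;
  src : Tr -> L;
  guard : Tr -> formula V;
  upd : Tr -> V -> pexpr int V;
  tgt : Tr -> L;
  tgt_not_l0 : forall t, tgt t != l0
}.

Section Prog.
Variables (V L Tr : finType) (P : intprog V L Tr).

Definition step (t : Tr) (l : L) (s : state V) (l' : L) (s' : state V) : Prop :=
  [/\ src P t = l, tgt P t = l', fholds s (guard P t)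
    & forall v, s' v = peval s (upd P t v)].

Inductive reach (A : {set Tr}) : L -> state V -> L -> state V -> Prop :=
| reach_refl l s : reach A l s l s
| reach_step l s l1 s1 t l2 s2 :
    reach A l s l1 s1 -> t \in A -> step t l1 s1 l2 s2 -> reach A l s l2 s2.

Definition T0 : {set Tr} := [set t | src P t == l0 P].

Definition entries (T' : {set Tr}) : {set Tr} :=
  [set t | (t \notin T') && [exists t2 in T', src P t2 == tgt P t]].
End Prog.

(* ---------- Extended naturals N u {omega}: None = omega ---------- *)
Definition enat := option nat.
Definition eadd (a b : enat) : enat :=
  match a, b with Some x, Some y => Some (x + y) | _, _ => None end.
(* convention 0 * omega = omega * 0 = 0 *)
Definition emul (a b : enat) : enat :=
  match a, b with
  | Some x, Some y => Some (x * y)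
  | Some 0, None | None, Some 0 => Some 0
  | _, _ => None
  end.
(* (k.+1) ^ a ; 1 ^ omega = 1, k ^ omega = omega for k >= 2 *)
Definition epow (k : nat) (a : enat) : enat :=
  match a with
  | Some x => Some (k.+1 ^ x)
  | None => if k == 0 then Some 1 else None
  end.
Definition ele (a b : enat) : bool :=
  match a, b with
  | _, None => true
  | Some x, Some y => x <= y
  | None, Some _ => false
  end.

(* BPow k b denotes (k.+1)^b, i.e. bases k >= 1 *)
Inductive bound (V : Type) : Type :=
| BNat of nat
| BOmega
| BVar of V
| BAdd of bound V & bound V
| BMul of bound V & bound V
| BPow of nat & bound V.
Arguments BNat {V}. Arguments BOmega {V}.

Fixpoint beval (V : Type) (rho : V -> enat) (b : bound V) : enat :=
  match b with
  | BNat n => Some n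
  | BOmega => None
  | BVar v => rho v
  | BAdd a c => eadd (beval rho a) (beval rho c)
  | BMul a c => emul (beval rho a) (beval rho c)
  | BPow k a => epow k (beval rho a)
  end.

Fixpoint bsubst (V : Type) (b : bound V) (p : V -> bound V) : bound V :=
  match b with
  | BNat n => BNat n
  | BOmega => BOmega
  | BVar v => p v
  | BAdd a c => BAdd (bsubst a p) (bsubst c p)
  | BMul a c => BMul (bsubst a p) (bsubst c p)
  | BPow k a => BPow k (bsubst a p)
  end.

Definition bsum (V I : Type) (s : seq I) (f : I -> bound V) : bound V :=
  foldr (fun i acc => BAdd (f i) acc) (BNat 0) s.

Definition abs_state (V : Type) (s : state V) : V -> enat :=
  fun v => Some `|s v|%N.

Definition is_size_bound (V L Tr : finType) (P : intprog V L Tr)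
    (SB : Tr -> V -> bound V) : Prop :=
  forall (t : Tr) (x : V) (s0 : state V) (l1 : L) (s1 : state V)
         (l' : L) (s' : state V),
    reach P [set: Tr] (l0 P) s0 l1 s1 -> step P t l1 s1 l' s' ->
    ele (Some `|s' x|%N) (beval (abs_state s0) (SB t x)).

Definition is_local_size_bound (V L Tr : finType) (P : intprog V L Tr)
    (T' : {set Tr}) (t' : Tr) (SBl : V -> bound V) : Prop :=
  forall (x : V) (s : state V) (r : Tr) (l1 : L) (s1 : state V)
         (l' : L) (s' : state V),
    r \in entries P T' ->
    reach P T' (tgt P r) s l1 s1 -> step P t' l1 s1 l' s' ->
    ele (Some `|s' x|%N) (beval (abs_state s) (SBl x)).

Definition SB_refined (V L Tr : finType) (P : intprog V L Tr)
    (T' : {set Tr}) (t' : Tr) (SBl : V -> bound V) (SB : Tr -> V -> bound V)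
    : Tr -> V -> bound V :=
  fun t x =>
    if t == t' then bsum (enum (entries P T')) (fun r => bsubst (SBl x) (SB r))
    else SB t x.

From mathcomp Require Import all_boot all_order all_algebra.
From mathcomp Require Import zify.

(* Since [T'] avoids [l0], a run from [l0] that fires [t' \in T'] must have
   entered [T'] through an entry transition [r], after which it only uses
   transitions of [T'].  The values just after [r] are bounded by [SB r], the
   final values by the local bound evaluated at those values, and since bounds
   are monotone in their variables, substituting [SB r] into [SBl] bounds the
   final values; the sum over all entries dominates the summand for [r]. *)

Lemma ele_trans a b c : ele a b -> ele b c -> ele a c.
Proof. by case: a => [x|]; case: b => [y|]; case: c => [z|] //=; apply: leq_trans. Qed.
Arguments ele_trans {a b c}.

Lemma ele_add a b a' b' : ele a a' -> ele b b' -> ele (eadd a b) (eadd a' b').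
Proof.
by case: a => [x|]; case: b => [y|]; case: a' => [x'|]; case: b' => [y'|] //=; apply: leq_add.
Qed.

Lemma ele_mul a b a' b' : ele a a' -> ele b b' -> ele (emul a b) (emul a' b').
Proof.
case: a => [[|x]|]; case: b => [[|y]|]; case: a' => [[|x']|]; case: b' => [[|y']|] //=;
  rewrite ?muln0 ?mul0n //; nia.
Qed.

Lemma ele_pow k a a' : ele a a' -> ele (epow k a) (epow k a').
Proof.
case: a => [x|]; case: a' => [x'|] //=; first exact: leq_pexp2l.
- by case: k => [|k] //= _; rewrite exp1n.
- by case: k.
Qed.

Lemma ele_addr x y : ele x (eadd x y).
Proof. by case: x => [x|]; case: y => [y|] //=; apply: leq_addr. Qed.

Lemma ele_addl x y : ele x (eadd y x).
Proof. by case: x => [x|]; case: y => [y|] //=; apply: leq_addl. Qed.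

Lemma beval_mono (V : Type) (rho rho' : V -> enat) (b : bound V) :
  (forall v, ele (rho v) (rho' v)) -> ele (beval rho b) (beval rho' b).
Proof.
move=> le_rho; elim: b => [n||v|a Ha c Hc|a Ha c Hc|k a Ha] //=.
- exact: ele_add.
- exact: ele_mul.
- exact: ele_pow.
Qed.

Lemma beval_subst (V : Type) (rho : V -> enat) (b : bound V) (p : V -> bound V) :
  beval rho (bsubst b p) = beval (fun v => beval rho (p v)) b.
Proof. by elim: b => //= [a -> c ->|a -> c ->|k a ->]. Qed.

Lemma ele_bsum {V : Type} {I : eqType} (rho : V -> enat) {s : seq I}
    (f : I -> bound V) {i : I} :
  i \in s -> ele (beval rho (f i)) (beval rho (bsum s f)).
Proof.
elim: s => //= j s IHs; rewrite in_cons => /orP[/eqP ->|/IHs le_fi].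
- exact: ele_addr.
- exact: ele_trans le_fi (ele_addl _ _).
Qed.

Section Runs.
Context {V L Tr : finType} {P : intprog V L Tr}.

Lemma reach_refl_or_src {A : {set Tr}} {l s l1 s1} :
  reach P A l s l1 s1 -> l1 = l \/ exists2 t, t \in A & src P t = l.
Proof.
elim=> [l' s'|l' s' l2 s2 t l3 s3 _ IH tA [src_t _ _ _]]; first by left.
by case: IH => [<-|]; right => //; exists t.
Qed.

Lemma reach_split_last_outside (T' : {set Tr}) {l s l1 s1} :
  reach P [set: Tr] l s l1 s1 ->
  reach P T' l s l1 s1 \/
  exists r l2 s2 sr, [/\ reach P [set: Tr] l s l2 s2, step P r l2 s2 (tgt P r) sr,
                      r \notin T' & reach P T' (tgt P r) sr l1 s1].
Proof.
elim=> [l' s'|l' s' l2 s2 t l3 s3 run IH _ step_t]; first by left; apply: reach_refl.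
have [tT'|tNT'] := boolP (t \in T').
  case: IH => [IH|[r [l4 [s4 [sr [run1 step_r rNT' run2]]]]]].
    by left; apply: reach_step IH tT' step_t.
  by right; exists r, l4, s4, sr; split=> //; apply: reach_step run2 tT' step_t.
right; exists t, l2, s2, s3; case: (step_t) => _ tgt_t _ _.
by split=> //; [case: step_t | rewrite tgt_t; apply: reach_refl].
Qed.

Lemma reach_through_entry {T' : {set Tr}} {t' : Tr} {s0 l1 s1 l' s'} :
  T' \subset ~: T0 P -> t' \in T' ->
  reach P [set: Tr] (l0 P) s0 l1 s1 -> step P t' l1 s1 l' s' ->
  exists r l2 s2 sr, [/\ reach P [set: Tr] (l0 P) s0 l2 s2,
    step P r l2 s2 (tgt P r) sr, r \in entries P T' & reach P T' (tgt P r) sr l1 s1].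
Proof.
move=> /subsetP T'_notT0 t'T' run [src_t' _ _ _].
have src_T' u : u \in T' -> src P u != l0 P.
  by move=> /T'_notT0; rewrite !inE.
case: (reach_split_last_outside T' run) => [runT'|[r [l2 [s2 [sr [run1 step_r rNT' run2]]]]]].
  case: (reach_refl_or_src runT') => [l1E|[u uT' src_u]].
    by move: (src_T' _ t'T'); rewrite src_t' l1E eqxx.
  by move: (src_T' _ uT'); rewrite src_u eqxx.
exists r, l2, s2, sr; split=> //; rewrite inE rNT' /=; apply/existsP.
case: (reach_refl_or_src run2) => [l1E|[u uT' src_u]].
  by exists t'; rewrite t'T' src_t' l1E /=.
by exists u; rewrite uT' src_u /=.
Qed.

End Runs.

Theorem theorem34 (V L Tr : finType) (P : intprog V L Tr) (T' : {set Tr}) (t' : Tr)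
    (SBl : V -> bound V) (SB : Tr -> V -> bound V) :
  T' != set0 ->
  T' \subset ~: T0 P ->
  t' \in T' ->
  is_local_size_bound P T' t' SBl ->
  is_size_bound P SB ->
  is_size_bound P (SB_refined P T' t' SBl SB).
Proof.
move=> _ T'_notT0 t'T' SBl_local SB_size t x s0 l1 s1 l' s' run step_t.
rewrite /SB_refined; case: eqP step_t => [-> | _] step_t; last exact: SB_size run step_t.
have [r [l2 [s2 [sr [run1 step_r rE run2]]]]] :=
  reach_through_entry T'_notT0 t'T' run step_t.
apply: ele_trans (SBl_local x sr r l1 s1 l' s' rE run2 step_t) _.
have rE' : r \in enum (entries P T') by rewrite mem_enum.
apply: ele_trans _ (ele_bsum _ (fun r => bsubst (SBl x) (SB r)) rE').
rewrite beval_subst; apply: beval_mono => v.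
exact: SB_size run1 step_r.
Qed.
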